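(* Let $\mathcal Z,\mathcal S$ be finite, $f:\mathcal Z\times\mathcal S\to\mathbb R$, and $(Z_i,S_i)$, $i=1,\dots,n$, random variables with a common joint law $P_{ZS}$ (not depending on $i$) such that $\Pr[\mathbf S=\mathbf s\mid\mathbf Z=\mathbf z]=\prod_{i=1}^n\Pr[S_i=s_i\mid Z_i=z_i]$. Suppose there are reals $a<b$ such that for every $z$ with $P_Z(z)>0$ and every $s$ with $P_{S|Z}(s|z)>0$, $a\le f(z,s)-\mathbb E_{S\sim P_{S|Z}(\cdot|z)}[f(z,S)]\le b$. Then for every type $p$ with $\Pr[\hat p_{\mathbf Z}=p]>0$ and every $\xi>0$, $$\Pr\Big[\Big|\sum_{i=1}^n f(Z_i,S_i)-\mu\Big|\ge\xi\ \Big|\ \hat p_{\mathbf Z}=p\Big]\le 2e^{-\frac{\xi^2}{n(b-a)^2}},$$ where $\mu=\mathbb E\big[\sum_{i=1}^n f(Z_i,S_i)\mid\hat p_{\mathbf Z}=p\big]$.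
   Context: $\mathbf Z=(Z_1,\dots,Z_n)$, $\mathbf S=(S_1,\dots,S_n)$; $\hat p_{\mathbf Z}$ is the empirical distribution (type) of $\mathbf Z$; $P_{S|Z}$ is the conditional of $P_{ZS}$. *)

From HB Require Import structures.
From mathcomp Require Import all_boot all_order all_algebra.
From mathcomp Require Import reals.
From mathcomp.analysis Require Import sequences exp.
Set Implicit Arguments. Unset Strict Implicit. Unset Printing Implicit Defensive.
Import Order.TTheory GRing.Theory Num.Theory.
Local Open Scope ring_scope.

Definition is_pmf (R : realType) (Omega : finType) (P : Omega -> R) : Prop :=
  (forall w, 0 <= P w) /\ \sum_(w : Omega) P w = 1.

Definition Pr (R : realType) (Omega : finType) (P : Omega -> R) (E : pred Omega) : R :=
  \sum_(w : Omega | E w) P w.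

Definition cPr (R : realType) (Omega : finType) (P : Omega -> R) (E C : pred Omega) : R :=
  Pr P (predI E C) / Pr P C.

Definition cExp (R : realType) (Omega : finType) (P : Omega -> R) (X : Omega -> R)
    (C : pred Omega) : R :=
  (\sum_(w : Omega | C w) P w * X w) / Pr P C.

Definition rvec (Omega : finType) (T : Type) (n : nat) (X : 'I_n -> Omega -> T)
    (w : Omega) : {ffun 'I_n -> T} := [ffun i => X i w].

Definition emp (R : realType) (T : finType) (n : nat) (z : {ffun 'I_n -> T})
  : {ffun T -> R} := [ffun a => #|[set i | z i == a]|%:R / n%:R].

Definition margZ (R : realType) (Zt St : finType) (PZS : Zt -> St -> R) (z : Zt) : R :=
  \sum_(s : St) PZS z s.

Definition condSZ (R : realType) (Zt St : finType) (PZS : Zt -> St -> R)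
    (s : St) (z : Zt) : R :=
  PZS z s / margZ PZS z.

(* Given Z = z, the factorisation hypothesis makes S_1, ..., S_n independent with
   S_i ~ P_{S|Z}(.|z_i).  On the event that the type of Z is p, the conditional mean
   of sum_i f(z_i, S_i) depends on z only through its type, hence equals mu, and
   sum_i f(z_i, S_i) - mu is a sum of n independent centred variables with ranges
   in [a, b].  Hoeffding's inequality bounds every such conditional tail, and
   averaging over z gives the claim.  The stated exponent only needs Hoeffding's
   lemma E e^{lY} <= e^{l^2 (b-a)^2 / 4} with constant 1/4: by convexity of exp it
   reduces to a two-point law, whose log-mgf has derivative at most th + h/3 for
   h >= 0, and two tangent-line steps of length h/2 integrate this bound. *)

From HB Require Import structures.
From mathcomp Require Import all_boot all_order all_algebra.
From mathcomp Require Import reals interval_inference ring lra.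
From mathcomp.analysis Require Import sequences exp convex.
Set Implicit Arguments. Unset Strict Implicit. Unset Printing Implicit Defensive.
Import Order.TTheory GRing.Theory Num.Theory.
Local Open Scope ring_scope.

Section HoeffdingLemma.
Variable R : realType.

Lemma expR_convex (t u v : R) : 0 <= t <= 1 ->
  expR (t * u + (1 - t) * v) <= t * expR u + (1 - t) * expR v.
Proof. by case/andP=> t0 t1; exact: (convex_expR (Itv01 t0 t1) u v). Qed.

Definition bernoulli_mgf (th x : R) : R := 1 - th + th * expR x.

Definition tilted_mean (th x : R) : R := th * expR x / bernoulli_mgf th x.

Lemma bernoulli_mgf_gt0 (th x : R) : 0 <= th <= 1 -> 0 < bernoulli_mgf th x.
Proof. by case/andP=> t0 t1; rewrite /bernoulli_mgf; have := expR_gt0 x; nra. Qed.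

Lemma tilted_mean_ge0 (th x : R) : 0 <= th <= 1 -> 0 <= tilted_mean th x.
Proof.
move=> th01; have /andP[th0 _] := th01.
by rewrite divr_ge0 ?mulr_ge0 ?expR_ge0 // ltW // bernoulli_mgf_gt0.
Qed.

Lemma tilted_mean_le1 (th x : R) : 0 <= th <= 1 -> tilted_mean th x <= 1.
Proof.
move=> th01; rewrite ler_pdivrMr ?bernoulli_mgf_gt0 // mul1r /bernoulli_mgf.
by case/andP: th01 => _; lra.
Qed.

(* Tangent-line bound for the convex function [log bernoulli_mgf th], whose
   derivative at [x] is [tilted_mean th x]. *)
Lemma bernoulli_mgf_tilt (th x d : R) : 0 <= th <= 1 ->
  bernoulli_mgf th x <= bernoulli_mgf th (x - d) * expR (d * tilted_mean th x).
Proof.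
move=> th01; set u := tilted_mean th x.
have G0 : 1 - th + th * expR x != 0 by rewrite gt_eqF // bernoulli_mgf_gt0.
have u01 : 0 <= u <= 1 by rewrite tilted_mean_ge0 ?tilted_mean_le1.
have shift : bernoulli_mgf th (x - d) =
    bernoulli_mgf th x * (u * expR (- d) + (1 - u) * expR 0).
  rewrite /u /tilted_mean /bernoulli_mgf expR0 expRB mulr1 expRN.
  by field; rewrite G0 gt_eqF ?expR_gt0.
rewrite shift -mulrA -[X in X <= _]mulr1 ler_pM2l ?bernoulli_mgf_gt0 //.
apply: le_trans (ler_wpM2r (expR_ge0 (d * u)) (expR_convex (- d) 0 u01)).
by rewrite -expRD mulr0 addr0 mulrN mulrC addNr expR0.
Qed.

(* Equivalently [tanh (x / 4) <= x / 3]. *)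
Lemma expR_half_sub1_le (x : R) : 0 <= x ->
  3 * (expR (x / 2) - 1) <= x * (1 + expR (x / 2)).
Proof.
move=> x0; set w := expR (x / 4).
have ev : expR (x / 2) = w ^+ 2 by rewrite /w -expRM_natl; congr expR; field.
have w1 : 1 <= w by rewrite /w -expR0 ler_expR divr_ge0.
have w0 : 0 < w by exact: lt_le_trans ltr01 w1.
have xw : 4 * (w - 1) <= x * w.
  have := expR_ge1Dx (- (x / 4)); rewrite expRN -/w => h.
  have := ler_wpM2l (ltW w0) h; rewrite mulfV ?gt_eqF //; lra.
have cubic : 0 <= (w - 1) * (w ^+ 2 - 3 * w + 4).
  by rewrite mulr_ge0 ?subr_ge0 //; have := sqr_ge0 (w - 3 / 2); nra.
rewrite ev -(ler_pM2r w0); nra.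
Qed.

Lemma tilted_mean_le (th x : R) : 0 <= th <= 1 -> 0 <= x ->
  tilted_mean th x <= th + x / 3.
Proof.
move=> th01 x0; have /andP[th0 th1] := th01.
rewrite /tilted_mean ler_pdivrMr ?bernoulli_mgf_gt0 // /bernoulli_mgf.
set v := expR (x / 2).
have ex : expR x = v * v by rewrite /v -expRD; congr expR; field.
have v1 : 1 <= v by rewrite /v -expR0 ler_expR divr_ge0.
have tanh := expR_half_sub1_le x0; rewrite -/v in tanh.
set T := th * (1 - th).
have T0 : 0 <= T by rewrite mulr_ge0 // subr_ge0.
have amgm : T * (1 + v) ^+ 2 <= 1 - th + th * (v * v).
  by have := sqr_ge0 ((1 - th) - th * v); rewrite /T; nra.
have : 3 * T * (v - 1) * (1 + v) <= x * T * (1 + v) ^+ 2.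
  have : 0 <= T * (1 + v) by rewrite mulr_ge0 //; lra.
  nra.
have := ler_wpM2l x0 amgm.
rewrite ex /T; nra.
Qed.

Lemma bernoulli_mgf_le (th h : R) : 0 <= th <= 1 -> 0 <= h ->
  bernoulli_mgf th h <= expR (th * h + h ^+ 2 / 4).
Proof.
move=> th01 h0; have h20 : 0 <= h / 2 by rewrite divr_ge0.
have step1 := bernoulli_mgf_tilt h (h / 2) th01.
have step2 := bernoulli_mgf_tilt (h / 2) (h / 2) th01.
rewrite (_ : h - h / 2 = h / 2) in step1; last by field.
rewrite subrr /bernoulli_mgf expR0 mulr1 subrK mul1r in step2.
apply: (le_trans step1); apply: le_trans (ler_wpM2r (expR_ge0 _) step2) _.
rewrite -expRD ler_expR.
have := ler_wpM2l h20 (tilted_mean_le th01 h0).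
have := ler_wpM2l h20 (tilted_mean_le th01 h20).
have : h / 2 * (th + h / 2 / 3) + h / 2 * (th + h / 3) = th * h + h ^+ 2 / 4.
  by field.
lra.
Qed.

Lemma centered_bernoulli_mgf_le (th h : R) : 0 <= th <= 1 ->
  (1 - th) * expR (- (th * h)) + th * expR ((1 - th) * h) <= expR (h ^+ 2 / 4).
Proof.
wlog h0 : th h / 0 <= h => [sym th01|th01].
  have [h0|hn] := lerP 0 h; first exact: sym.
  have th01' : 0 <= 1 - th <= 1 by case/andP: th01 => ? ?; apply/andP; split; lra.
  have := sym (1 - th) (- h); rewrite oppr_ge0 sqrrN subKr => /(_ (ltW hn) th01').
  by rewrite addrC !mulrN opprK.
apply: le_trans (_ : expR (- (th * h)) * expR (th * h + h ^+ 2 / 4) <= _); last first.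
  by rewrite -expRD addrA addNr add0r.
have -> : (1 - th) * expR (- (th * h)) + th * expR ((1 - th) * h) =
    expR (- (th * h)) * bernoulli_mgf th h.
  have -> : (1 - th) * h = - (th * h) + h by ring.
  by rewrite expRD /bernoulli_mgf; ring.
by rewrite ler_pM2l ?expR_gt0 ?bernoulli_mgf_le.
Qed.

Lemma expR_le_chord (a b y l : R) : a < b -> a <= y <= b ->
  expR (l * y) <= (b - y) / (b - a) * expR (l * a) + (y - a) / (b - a) * expR (l * b).
Proof.
move=> ab /andP[ay yb]; have ba : 0 < b - a by rewrite subr_gt0.
set t := (b - y) / (b - a).
have t01 : 0 <= t <= 1.
  by rewrite /t divr_ge0 ?subr_ge0 ?(ltW ab) //= ler_pdivrMr // mul1r; lra.
have -> : (y - a) / (b - a) = 1 - t by rewrite /t; field; rewrite gt_eqF.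
have -> : l * y = t * (l * a) + (1 - t) * (l * b) by rewrite /t; field; rewrite gt_eqF.
exact: expR_convex.
Qed.

Lemma ler_sum_weighted (T : finType) (q F G : T -> R) : (forall t, 0 <= q t) ->
  (forall t, 0 < q t -> F t <= G t) -> \sum_t q t * F t <= \sum_t q t * G t.
Proof.
move=> q0 FG; apply: ler_sum => t _.
have [->|qt] := eqVneq (q t) 0; first by rewrite !mul0r.
by rewrite ler_wpM2l ?FG // lt0r qt q0.
Qed.

Lemma pmf_mean_itv (T : finType) (q y : T -> R) (a b : R) : is_pmf q ->
  (forall t, 0 < q t -> a <= y t <= b) -> a <= \sum_t q t * y t <= b.
Proof.
move=> [q0 q1] range; have const c : c = \sum_t q t * c by rewrite -mulr_suml q1 mul1r.
rewrite {1}[a]const [b]const.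
by rewrite !ler_sum_weighted // => t /range /andP[].
Qed.

Lemma hoeffding_lemma (T : finType) (q y : T -> R) (a b l : R) : is_pmf q ->
  \sum_t q t * y t = 0 -> (forall t, 0 < q t -> a <= y t <= b) -> a < b ->
  \sum_t q t * expR (l * y t) <= expR (l ^+ 2 * (b - a) ^+ 2 / 4).
Proof.
move=> qpmf mean0 range ab; have [q0 q1] := qpmf.
have ba : 0 < b - a by rewrite subr_gt0.
have /andP[a0 b0] : a <= 0 <= b by rewrite -mean0 pmf_mean_itv.
set A := expR (l * a); set B := expR (l * b).
apply: le_trans (ler_sum_weighted q0 (fun t qt => expR_le_chord l ab (range t qt))) _.
have -> : \sum_t q t * ((b - y t) / (b - a) * A + (y t - a) / (b - a) * B)
    = (b * A - a * B) / (b - a).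
  transitivity (\sum_t (q t * ((b * A - a * B) / (b - a)) + q t * y t * ((B - A) / (b - a)))).
    by apply: eq_bigr => t _; field; rewrite gt_eqF.
  by rewrite big_split /= -!mulr_suml q1 mean0 mul0r addr0 mul1r.
set th := - a / (b - a).
have th01 : 0 <= th <= 1.
  by rewrite /th divr_ge0 ?oppr_ge0 ?(ltW ba) //= ler_pdivrMr // mul1r; lra.
have := centered_bernoulli_mgf_le (l * (b - a)) th01.
have ba0 : b - a != 0 by rewrite gt_eqF.
rewrite exprMn (_ : - (th * (l * (b - a))) = l * a); last by rewrite /th; field.
rewrite (_ : (1 - th) * (l * (b - a)) = l * b); last by rewrite /th; field.
by rewrite (_ : (b * A - a * B) / (b - a) = (1 - th) * A + th * B) // /th; field.
Qed.

End HoeffdingLemma.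

Section ProductWeights.
Variables (R : realType) (n : nat) (T : finType) (q : 'I_n -> T -> R).

Lemma sum_prod_expR_sum (l : R) (y : 'I_n -> T -> R) :
  \sum_(s : {ffun 'I_n -> T}) \prod_i q i (s i) * expR (l * \sum_i y i (s i))
  = \prod_i \sum_t q i t * expR (l * y i t).
Proof.
rewrite bigA_distr_bigA /=.
by apply: eq_bigr => s _; rewrite mulr_sumr expR_sum -big_split.
Qed.

Hypothesis q_sum1 : forall i, \sum_t q i t = 1.

Lemma sum_prod_mul_coord (i : 'I_n) (phi : T -> R) :
  \sum_(s : {ffun 'I_n -> T}) \prod_j q j (s j) * phi (s i) = \sum_t q i t * phi t.
Proof.
pose F j t := if j == i then q j t * phi t else q j t.
have prodF (s : {ffun 'I_n -> T}) : \prod_j q j (s j) * phi (s i) = \prod_j F j (s j).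
  rewrite (bigD1 i) //= [RHS](bigD1 i) //= /F eqxx mulrAC.
  by congr (_ * _); apply: eq_bigr => j /negbTE ->.
rewrite (eq_bigr _ (fun s _ => prodF s)) -(bigA_distr_bigA F) (bigD1 i) //= /F eqxx.
rewrite [X in _ * X]big1 ?mulr1 // => j /negbTE ji.
by rewrite (eq_bigr (q j)) ?q_sum1 // => t _; rewrite ji.
Qed.

Lemma sum_prod_mul_sum (phi : 'I_n -> T -> R) :
  \sum_(s : {ffun 'I_n -> T}) \prod_j q j (s j) * \sum_i phi i (s i)
  = \sum_i \sum_t q i t * phi i t.
Proof.
under eq_bigr do rewrite mulr_sumr.
by rewrite exchange_big; apply: eq_bigr => i _; exact: sum_prod_mul_coord.
Qed.

End ProductWeights.

Lemma chernoff_bound (R : realType) (U : finType) (Q Y : U -> R) (l xi : R) :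
  (forall u, 0 <= Q u) -> 0 <= l ->
  \sum_(u | xi <= Y u) Q u <= expR (- (l * xi)) * \sum_u Q u * expR (l * Y u).
Proof.
move=> Q0 l0; rewrite mulr_sumr [X in _ <= X](bigID (fun u => xi <= Y u)) /=.
apply: le_trans (_ : \sum_(u | xi <= Y u) expR (- (l * xi)) * (Q u * expR (l * Y u)) <= _).
  apply: ler_sum => u hu; rewrite mulrCA -[X in X <= _]mulr1 ler_wpM2l //.
  by rewrite -expRD -expR0 ler_expR addrC -mulrBr mulr_ge0 // subr_ge0.
by rewrite lerDl sumr_ge0 // => u _; rewrite !mulr_ge0 ?expR_ge0.
Qed.

Lemma sum_abs_tail_le (R : realType) (U : finType) (Q Y : U -> R) (xi : R) :
  (forall u, 0 <= Q u) ->
  \sum_(u | xi <= `|Y u|) Q u <= \sum_(u | xi <= Y u) Q u + \sum_(u | xi <= - Y u) Q u.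
Proof.
move=> Q0; rewrite !(big_mkcond (fun u => xi <= _)) -big_split /=.
apply: ler_sum => u _; rewrite ler_normr.
by case: (xi <= Y u); case: (xi <= - Y u); rewrite /= ?addr0 ?add0r ?lerDl ?Q0.
Qed.

Lemma hoeffding_upper_tail (R : realType) (n : nat) (T : finType) (q y : 'I_n -> T -> R)
    (a b xi : R) :
  (forall i, is_pmf (q i)) -> (forall i, \sum_t q i t * y i t = 0) ->
  (forall i t, 0 < q i t -> a <= y i t <= b) -> a < b -> 0 < xi ->
  \sum_(s : {ffun 'I_n -> T} | xi <= \sum_i y i (s i)) \prod_i q i (s i)
    <= expR (- (xi ^+ 2 / (n%:R * (b - a) ^+ 2))).
Proof.
move=> q_pmf mean0 range ab xi0.
have [n0|n_gt0] := posnP n.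
  rewrite big_pred0 ?expR_ge0 // => s; rewrite big1 ?lt_geF // => i _.
  by have := ltn_ord i; rewrite {2}n0.
have ba2 : 0 < (b - a) ^+ 2 by rewrite exprn_gt0 // subr_gt0.
have nba2 : 0 < n%:R * (b - a) ^+ 2 by rewrite mulr_gt0 ?ltr0n.
set l := 2 * xi / (n%:R * (b - a) ^+ 2).
have l0 : 0 <= l by apply: ltW; rewrite /l divr_gt0 // mulr_gt0.
have prodq_ge0 (s : {ffun 'I_n -> T}) : 0 <= \prod_i q i (s i).
  by apply: prodr_ge0 => i _; case: (q_pmf i).
pose Y (s : {ffun 'I_n -> T}) := \sum_i y i (s i).
apply: le_trans (chernoff_bound Y xi prodq_ge0 l0) _.
rewrite sum_prod_expR_sum.
apply: le_trans (_ : expR (- (l * xi)) * \prod_(i < n) expR (l ^+ 2 * (b - a) ^+ 2 / 4) <= _).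
  rewrite ler_wpM2l ?expR_ge0 //; apply: ler_prod => i _.
  rewrite sumr_ge0 /= => [|t _]; last by rewrite mulr_ge0 ?expR_ge0 //; case: (q_pmf i).
  exact: hoeffding_lemma (q_pmf i) (mean0 i) (range i) ab.
have optimal_l : - (l * xi) + n%:R * (l ^+ 2 * (b - a) ^+ 2 / 4)
    = - (xi ^+ 2 / (n%:R * (b - a) ^+ 2)).
  by rewrite /l; field; rewrite subr_eq0 (gt_eqF ab) pnatr_eq0 -lt0n n_gt0.
by rewrite prodr_const card_ord -expRM_natl -expRD optimal_l.
Qed.

Lemma hoeffding_tail (R : realType) (n : nat) (T : finType) (q y : 'I_n -> T -> R)
    (a b xi : R) :
  (forall i, is_pmf (q i)) -> (forall i, \sum_t q i t * y i t = 0) ->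
  (forall i t, 0 < q i t -> a <= y i t <= b) -> a < b -> 0 < xi ->
  \sum_(s : {ffun 'I_n -> T} | xi <= `|\sum_i y i (s i)|) \prod_i q i (s i)
    <= 2 * expR (- (xi ^+ 2 / (n%:R * (b - a) ^+ 2))).
Proof.
move=> q_pmf mean0 range ab xi0.
have prodq_ge0 (s : {ffun 'I_n -> T}) : 0 <= \prod_i q i (s i).
  by apply: prodr_ge0 => i _; case: (q_pmf i).
pose Y (s : {ffun 'I_n -> T}) := \sum_i y i (s i).
apply: le_trans (sum_abs_tail_le Y xi prodq_ge0) _.
rewrite mulr_natl mulr2n lerD ?(hoeffding_upper_tail q_pmf) //.
under eq_bigl do rewrite -sumrN.
rewrite -[b - a]opprB opprD.
apply: (hoeffding_upper_tail (y := fun i t => - y i t) q_pmf) => //; last by rewrite ltrN2.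
- by move=> i; under eq_bigr do rewrite mulrN; rewrite sumrN mean0 oppr0.
- by move=> i t /range /andP[ay yb]; rewrite !lerN2 ay yb.
Qed.

Section Types.
Variables (R : realType) (T : finType) (n : nat).

(* For [n = 0] both sides vanish although [emp] divides by [n%:R = 0]. *)
Lemma card_emp (z : {ffun 'I_n -> T}) (t : T) :
  #|[set i | z i == t]|%:R = emp R z t * n%:R.
Proof.
rewrite /emp ffunE; case: n z => [|m] z; last by rewrite divfK ?pnatr_eq0.
have : (#|[set i | z i == t]| <= #|'I_0|)%N by exact: max_card.
by rewrite card_ord leqn0 mulr0 => /eqP ->.
Qed.

Lemma sum_by_type (z : {ffun 'I_n -> T}) (g : T -> R) :
  \sum_i g (z i) = \sum_t emp R z t * n%:R * g t.
Proof.
rewrite (partition_big z xpredT) //=; apply: eq_bigr => t _.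
rewrite -card_emp (eq_bigr (fun _ => g t)) => [|i /eqP -> //].
by rewrite sumr_const mulr_natl; congr (_ *+ _); apply: eq_card => i; rewrite inE.
Qed.

End Types.

Section Probability.
Variables (R : realType) (Omega : finType) (P : Omega -> R).
Hypothesis P_ge0 : forall w, 0 <= P w.

Lemma Pr_ge0 (E : pred Omega) : 0 <= Pr P E.
Proof. exact: sumr_ge0. Qed.

Lemma le_Pr (E E' : pred Omega) : subpred E E' -> Pr P E <= Pr P E'.
Proof.
move=> EE'; rewrite /Pr [X in _ <= X](bigID E) /=.
rewrite (eq_bigl E) => [|w]; last by case Ew: (E w); rewrite ?andbF ?andbT ?EE'.
by rewrite lerDl sumr_ge0.
Qed.

Lemma Pr_predIE (E C : pred Omega) : Pr P (predI E C) = \sum_(w | C w) P w * (E w)%:R.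
Proof.
rewrite /Pr (eq_bigl (fun w => C w && E w)) => [|w]; last by rewrite /= andbC.
by rewrite big_mkcondr; under [RHS]eq_bigr do rewrite mulr_natr mulrb.
Qed.

End Probability.

Definition condSZn (R : realType) (Zt St : finType) (n : nat) (PZS : Zt -> St -> R)
    (z : {ffun 'I_n -> Zt}) (s : {ffun 'I_n -> St}) : R :=
  \prod_i condSZ PZS (s i) (z i).

Definition condMean (R : realType) (Zt St : finType) (PZS : Zt -> St -> R)
    (f : Zt -> St -> R) (z : Zt) : R :=
  \sum_s condSZ PZS s z * f z s.

Section ConditionalLaw.
Variables (R : realType) (Omega Zt St : finType) (n : nat) (P : Omega -> R).
Variables (Zr : 'I_n -> Omega -> Zt) (Sr : 'I_n -> Omega -> St) (PZS : Zt -> St -> R).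
Hypothesis P_ge0 : forall w, 0 <= P w.
Hypothesis law_ZS : forall i z s,
  Pr P [pred w | (Zr i w == z) && (Sr i w == s)] = PZS z s.
Hypothesis cond_indep : forall (z : {ffun 'I_n -> Zt}) (s : {ffun 'I_n -> St}),
  0 < Pr P [pred w | rvec Zr w == z] ->
  cPr P [pred w | rvec Sr w == s] [pred w | rvec Zr w == z]
  = \prod_i cPr P [pred w | Sr i w == s i] [pred w | Zr i w == z i].

Let PrZ (z : {ffun 'I_n -> Zt}) := Pr P [pred w | rvec Zr w == z].

Lemma Pr_Zi (i : 'I_n) (z : Zt) : Pr P [pred w | Zr i w == z] = margZ PZS z.
Proof.
rewrite /margZ -(eq_bigr _ (fun s _ => law_ZS i z s)) /Pr.
exact: (partition_big (Sr i) xpredT).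
Qed.

Lemma PZS_ge0 (i : 'I_n) (z : Zt) (s : St) : 0 <= PZS z s.
Proof. by rewrite -(law_ZS i); exact: Pr_ge0. Qed.

Lemma margZ_gt0 (z : {ffun 'I_n -> Zt}) (i : 'I_n) : 0 < PrZ z -> 0 < margZ PZS (z i).
Proof.
move=> Pz; rewrite -(Pr_Zi i); apply: lt_le_trans Pz (le_Pr P_ge0 _) => w /eqP <-.
by rewrite /= ffunE.
Qed.

Lemma condSZ_pmf (z : {ffun 'I_n -> Zt}) (i : 'I_n) :
  0 < PrZ z -> is_pmf (fun s => condSZ PZS s (z i)).
Proof.
move=> /(margZ_gt0 i) m_gt0; split => [s|].
  by rewrite divr_ge0 ?(PZS_ge0 i) ?ltW.
by rewrite /condSZ -mulr_suml divff ?gt_eqF.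
Qed.

Lemma Pr_rvec_joint (z : {ffun 'I_n -> Zt}) (s : {ffun 'I_n -> St}) :
  Pr P [pred w | (rvec Zr w == z) && (rvec Sr w == s)] = PrZ z * condSZn PZS z s.
Proof.
have [Pz0|Pz_gt0] := eqVneq (PrZ z) 0.
  rewrite Pz0 mul0r; apply/eqP; rewrite eq_le Pr_ge0 // andbT -Pz0.
  by apply: le_Pr => // w /andP[].
have Pz : 0 < PrZ z by rewrite lt0r Pz_gt0 Pr_ge0.
have predIC (E C : pred Omega) : Pr P [pred w | C w && E w] = Pr P (predI E C).
  by apply: eq_bigl => w; rewrite /= andbC.
rewrite (predIC [pred w | rvec Sr w == s] [pred w | rvec Zr w == z]).
rewrite -(divfK Pz_gt0 (Pr P (predI _ _))) -[_ / _]/(cPr P _ _) cond_indep // mulrC.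
congr (_ * _); apply: eq_bigr => i _.
by rewrite /condSZ -(Pr_Zi i) -(law_ZS i) predIC.
Qed.

Lemma sum_rvec_disintegrate (D : pred {ffun 'I_n -> Zt})
    (Phi : {ffun 'I_n -> Zt} -> {ffun 'I_n -> St} -> R) :
  \sum_(w | D (rvec Zr w)) P w * Phi (rvec Zr w) (rvec Sr w)
  = \sum_(z | D z) PrZ z * \sum_s condSZn PZS z s * Phi z s.
Proof.
rewrite (partition_big (rvec Zr) D) //=; apply: eq_bigr => z Dz.
rewrite (partition_big (rvec Sr) xpredT) //= mulr_sumr; apply: eq_bigr => s _.
rewrite mulrA -Pr_rvec_joint /Pr big_distrl /=.
apply: eq_big => [w|w /andP[/andP[_ /eqP->] /eqP->] //].
by case: eqP => [->|]; rewrite ?Dz ?andbF.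
Qed.

Lemma Pr_rvec_pred (D : pred {ffun 'I_n -> Zt}) :
  Pr P [pred w | D (rvec Zr w)] = \sum_(z | D z) PrZ z.
Proof.
rewrite /Pr (partition_big (rvec Zr) D) //=; apply: eq_bigr => z Dz.
by apply: eq_bigl => w /=; case: eqP => [->|]; rewrite ?Dz ?andbF.
Qed.

Lemma sum_rvec_le (D : pred {ffun 'I_n -> Zt})
    (Phi : {ffun 'I_n -> Zt} -> {ffun 'I_n -> St} -> R) (c : R) :
  (forall z, D z -> 0 < PrZ z -> \sum_s condSZn PZS z s * Phi z s <= c) ->
  \sum_(w | D (rvec Zr w)) P w * Phi (rvec Zr w) (rvec Sr w)
    <= c * Pr P [pred w | D (rvec Zr w)].
Proof.
move=> bound; rewrite sum_rvec_disintegrate Pr_rvec_pred mulr_sumr.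
apply: ler_sum => z Dz; rewrite mulrC.
have [->|Pz_gt0] := eqVneq (PrZ z) 0; first by rewrite !mulr0.
by rewrite ler_wpM2r ?Pr_ge0 // bound // lt0r Pz_gt0 Pr_ge0.
Qed.

Lemma sum_rvec_eq (D : pred {ffun 'I_n -> Zt})
    (Phi : {ffun 'I_n -> Zt} -> {ffun 'I_n -> St} -> R) (c : R) :
  (forall z, D z -> 0 < PrZ z -> \sum_s condSZn PZS z s * Phi z s = c) ->
  \sum_(w | D (rvec Zr w)) P w * Phi (rvec Zr w) (rvec Sr w)
    = c * Pr P [pred w | D (rvec Zr w)].
Proof.
move=> mean; rewrite sum_rvec_disintegrate Pr_rvec_pred mulr_sumr.
apply: eq_bigr => z Dz; rewrite mulrC.
have [->|Pz_gt0] := eqVneq (PrZ z) 0; first by rewrite !mulr0.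
by rewrite mean // lt0r Pz_gt0 Pr_ge0.
Qed.

Lemma condSZn_mean_sum (f : Zt -> St -> R) (z : {ffun 'I_n -> Zt}) : 0 < PrZ z ->
  \sum_s condSZn PZS z s * \sum_i f (z i) (s i) = \sum_i condMean PZS f (z i).
Proof.
move=> Pz; apply: (sum_prod_mul_sum (q := fun i s => condSZ PZS s (z i))).
by move=> i; case: (condSZ_pmf i Pz).
Qed.

Lemma condSZn_tail (f : Zt -> St -> R) (a b xi : R) (z : {ffun 'I_n -> Zt}) :
  (forall z0 s, 0 < margZ PZS z0 -> 0 < condSZ PZS s z0 ->
     a <= f z0 s - condMean PZS f z0 <= b) ->
  a < b -> 0 < xi -> 0 < PrZ z ->
  \sum_s condSZn PZS z s * (xi <= `|\sum_i f (z i) (s i) - \sum_i condMean PZS f (z i)|)%R%:R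
    <= 2 * expR (- (xi ^+ 2 / (n%:R * (b - a) ^+ 2))).
Proof.
move=> range ab xi0 Pz; have pmf i := condSZ_pmf i Pz.
under eq_bigr do rewrite mulr_natr mulrb.
rewrite -big_mkcond /=; under eq_bigl do rewrite -sumrB.
apply: (hoeffding_tail (q := fun i s => condSZ PZS s (z i))
    (y := fun i s => f (z i) s - condMean PZS f (z i))) => // [i|i t qt].
  under eq_bigr do rewrite mulrBr.
  by rewrite sumrB -mulr_suml (pmf i).2 mul1r subrr.
by apply: range => //; exact: margZ_gt0.
Qed.

End ConditionalLaw.

Theorem lemma17 (R : realType) (Zt St : finType) (f : Zt -> St -> R) (n : nat)
  (Omega : finType) (P : Omega -> R)
  (Zr : 'I_n -> Omega -> Zt) (Sr : 'I_n -> Omega -> St)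
  (PZS : Zt -> St -> R) (a b : R) :
  is_pmf P ->
  (* each (Z_i, S_i) has the common joint law P_ZS *)
  (forall (i : 'I_n) (z : Zt) (s : St),
      Pr P [pred w | (Zr i w == z) && (Sr i w == s)] = PZS z s) ->
  (* Pr[S = s | Z = z] = prod_i Pr[S_i = s_i | Z_i = z_i] *)
  (forall (z : {ffun 'I_n -> Zt}) (s : {ffun 'I_n -> St}),
      0 < Pr P [pred w | rvec Zr w == z] ->
      cPr P [pred w | rvec Sr w == s] [pred w | rvec Zr w == z]
      = \prod_(i < n) cPr P [pred w | Sr i w == s i] [pred w | Zr i w == z i]) ->
  a < b ->
  (forall (z : Zt) (s : St), 0 < margZ PZS z -> 0 < condSZ PZS s z ->
      a <= f z s - \sum_(s' : St) condSZ PZS s' z * f z s' <= b) ->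
  forall (p : {ffun Zt -> R}) (xi : R),
    0 < Pr P [pred w | emp R (rvec Zr w) == p] ->
    0 < xi ->
    let C := [pred w | emp R (rvec Zr w) == p] in
    let sumf := fun w => \sum_(i < n) f (Zr i w) (Sr i w) in
    let mu := cExp P sumf C in
    cPr P [pred w | xi <= `|sumf w - mu|] C
      <= 2 * expR (- (xi ^+ 2 / (n%:R * (b - a) ^+ 2))).
Proof.
move=> [P_ge0 _] law_ZS cond_indep ab range p xi PC_gt0 xi_gt0; cbv zeta.
set C := [pred w | emp R (rvec Zr w) == p].
set sumf := fun w => \sum_(i < n) f (Zr i w) (Sr i w).
set mu := cExp P sumf C.
pose M := \sum_t p t * n%:R * condMean PZS f t.
have sum_condMean (z : {ffun 'I_n -> Zt}) : emp R z == p -> \sum_i condMean PZS f (z i) = M.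
  by rewrite /M sum_by_type => /eqP <-.
have sumfE w : sumf w = \sum_i f (rvec Zr w i) (rvec Sr w i).
  by apply: eq_bigr => i _; rewrite !ffunE.
have mu_eq : mu = M.
  rewrite /mu /cExp (eq_bigr _ (fun w _ => congr1 (GRing.mul (P w)) (sumfE w))).
  rewrite (sum_rvec_eq P_ge0 law_ZS cond_indep (D := fun z => emp R z == p)
    (Phi := fun z s => \sum_i f (z i) (s i)) (c := M)) ?mulfK ?gt_eqF //.
  by move=> z /sum_condMean <-; exact: condSZn_mean_sum.
rewrite /cPr Pr_predIE ler_pdivrMr //.
under eq_bigr do rewrite /= sumfE mu_eq.
apply: (sum_rvec_le P_ge0 law_ZS cond_indep (D := fun z => emp R z == p)
  (Phi := fun z s => (xi <= `|\sum_i f (z i) (s i) - M|)%R%:R)) => z /sum_condMean <-.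
exact: condSZn_tail.
Qed.
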